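(* Let $A,X\in M_n(\mathbb{C})$ and $1\le m\le n$. Then $$\|D^m\operatorname{per}A\|\le\frac{n!}{(n-m)!}\|A\|^{n-m}$$ and $$|\operatorname{per}(A+X)-\operatorname{per}A|\le(\|A\|+\|X\|)^n-\|A\|^n.$$
   Context: $\operatorname{per}A=\sum_{\sigma\in S_n}\prod_ia_{i\sigma(i)}$ is the permanent. $D^m\operatorname{per}(A)(X^1,\ldots,X^m)=\frac{\partial^m}{\partial t_1\cdots\partial t_m}\big|_{t=0}\operatorname{per}(A+t_1X^1+\cdots+t_mX^m)$, and $\|D^m\operatorname{per}A\|=\sup_{\|X^1\|=\cdots=\|X^m\|=1}|D^m\operatorname{per}(A)(X^1,\ldots,X^m)|$. $\|\cdot\|$ on matrices is the operator (spectral) norm. *)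

(* Complex numbers are modelled by an arbitrary
   numClosedFieldType C (e.g. algC). *)
From HB Require Import structures.
From mathcomp Require Import all_boot all_order all_fingroup all_algebra.
Set Implicit Arguments. Unset Strict Implicit. Unset Printing Implicit Defensive.
Import Order.TTheory GRing.Theory Num.Theory.
Local Open Scope ring_scope.

Definition per (R : pzRingType) (n : nat) (A : 'M[R]_n) : R :=
  \sum_(s : 'S_n) \prod_(i < n) A i (s i).

(* Mixed derivative D^m per(A)(X^1,...,X^m)
   = d^m/(dt_1 ... dt_m)|_{t=0} per(A + t_1 X^1 + ... + t_m X^m),
   computed one variable at a time: the last variable t_m is adjoined as a
   polynomial indeterminate 'X, the remaining m-1 derivatives are taken
   recursively (with coefficients in {poly R}), and then the (formal)
   derivative in t_m is evaluated at t_m = 0. *)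
Fixpoint Dper (m : nat) :
  forall (R : comNzRingType) (n : nat), 'M[R]_n -> ('I_m -> 'M[R]_n) -> R :=
  match m return forall (R : comNzRingType) (n : nat),
                   'M[R]_n -> ('I_m -> 'M[R]_n) -> R with
  | 0 => fun R n A _ => per A
  | m'.+1 => fun R n A Xs =>
      (@Dper m' {poly R} n
         (map_mx polyC A + 'X *: map_mx polyC (Xs ord_max))
         (fun i => map_mx polyC (Xs (widen_ord (leqnSn m') i))))^`().[0]
  end.

Definition vnorm (C : numClosedFieldType) (n : nat) (v : 'cV[C]_n) : C :=
  sqrtC (\sum_(i < n) `|v i 0| ^+ 2).

Definition is_opnorm (C : numClosedFieldType) (n : nat) (A : 'M[C]_n) (c : C) : Prop :=
  (forall v : 'cV[C]_n, vnorm (A *m v) <= c * vnorm v) /\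
  (forall c' : C, (forall v : 'cV[C]_n, vnorm (A *m v) <= c' * vnorm v) -> c <= c').

From HB Require Import structures.
From mathcomp Require Import all_boot all_order all_fingroup all_algebra.
Set Implicit Arguments. Unset Strict Implicit. Unset Printing Implicit Defensive.
Import Order.TTheory GRing.Theory Num.Theory.
Local Open Scope ring_scope.

(* Let u be the indicator of the injective maps 'I_n -> 'I_n, a vector of the
   tensor power (C^n)^(x)n. For matrices M_0, ..., M_(n-1), the sum over pairs of
   permutations sum_(s, t) prod_i M_i (s i) (t i) is <u, (M_0 (x) ... (x) M_(n-1)) u>,
   hence by Cauchy-Schwarz it has modulus at most |u|^2 prod_i |M_i| = n! prod_i |M_i|.
   Both n! D^m per(A)(X^1, ..., X^m) and n! (per(A + X) - per A) are sums of such
   terms: the first over the n!/(n-m)! injections c : 'I_m -> 'I_n (X^k in slot c k,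
   A elsewhere), the second over the nonempty sets of slots where X replaces A. *)

Section FunctionUpdate.

Variables (I J : finType).
Implicit Types (f r : {ffun I -> J}) (i : I) (j : J).

Definition fupd f i j : {ffun I -> J} := [ffun k => if k == i then j else f k].

Lemma fupdE f i j k : fupd f i j k = if k == i then j else f k.
Proof. by rewrite ffunE. Qed.

Lemma fupd_fupd f i j j' : fupd (fupd f i j) i j' = fupd f i j'.
Proof. by apply/ffunP => k; rewrite !fupdE; case: eqP. Qed.

Lemma fupd_id f i : fupd f i (f i) = f.
Proof. by apply/ffunP => k; rewrite fupdE; case: eqP => // ->. Qed.

Lemma fupd_eq f i j : (fupd f i j == f) = (f i == j).
Proof.
apply/eqP/eqP => [<-|<-]; first by rewrite fupdE eqxx.
exact: fupd_id.
Qed.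

Lemma big_fupd (V : nmodType) i j0 (G : {ffun I -> J} -> V) :
  \sum_f G f = \sum_(r : {ffun I -> J} | r i == j0) \sum_j G (fupd r i j).
Proof.
rewrite exchange_big /= (partition_big (fun f => f i) xpredT) //=.
apply: eq_bigr => j _.
rewrite (reindex_onto (fun r => fupd r i j) (fun f => fupd f i j0)) /=.
  by apply: eq_bigl => r; rewrite fupdE eqxx eqxx /= fupd_fupd fupd_eq.
by move=> f /eqP fi; rewrite fupd_fupd -fi fupd_id.
Qed.

End FunctionUpdate.

Section VectorNorm.

Variable C : numClosedFieldType.

Lemma vnorm_ge0 n (v : 'cV[C]_n) : 0 <= vnorm v.
Proof. by rewrite sqrtC_ge0 sumr_ge0 // => i _; rewrite exprn_ge0. Qed.

Lemma vnorm_sqr n (v : 'cV[C]_n) : vnorm v ^+ 2 = \sum_i `|v i 0| ^+ 2.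
Proof. by rewrite sqrtCK. Qed.

Lemma opnorm_ge0 n (M : 'M[C]_n) (c : C) :
  (0 < n)%N -> (forall v, vnorm (M *m v) <= c * vnorm v) -> 0 <= c.
Proof.
move=> n_gt0 leMc; have one_gt0 : 0 < vnorm (const_mx 1 : 'cV[C]_n).
  rewrite sqrtC_gt0; under eq_bigr => i _ do rewrite mxE normr1 expr1n.
  by rewrite sumr_const card_ord ltr0n.
by rewrite -(pmulr_lge0 _ one_gt0); apply: le_trans (vnorm_ge0 _) (leMc _).
Qed.

End VectorNorm.

Section ActAt.

Variables (C : numClosedFieldType) (I : finType) (n : nat).

(* Functions {ffun I -> 'I_n} -> C are the vectors of the tensor power of C^n
   indexed by I; act_at M i lets M act on the i-th tensor factor. *)
Definition sqnorm (g : {ffun I -> 'I_n} -> C) := \sum_f `|g f| ^+ 2.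

Definition act_at (M : 'M[C]_n) (i : I) (g : {ffun I -> 'I_n} -> C) :=
  fun f : {ffun I -> 'I_n} => \sum_j M (f i) j * g (fupd f i j).

Lemma sqnorm_act_at (M : 'M[C]_n) (c : C) i g :
  (forall v, vnorm (M *m v) <= c * vnorm v) ->
  sqnorm (act_at M i g) <= c ^+ 2 * sqnorm g.
Proof.
move=> leMc; rewrite /sqnorm.
have [f0 _|no_f] := pickP (fun _ : {ffun I -> 'I_n} => true); last first.
  by rewrite !big_pred0 ?mulr0.
rewrite (big_fupd i (f0 i)) [X in _ <= _ * X](big_fupd i (f0 i)) mulr_sumr.
apply: ler_sum => r _.
pose v : 'cV[C]_n := \col_j g (fupd r i j).
have -> : \sum_j `|act_at M i g (fupd r i j)| ^+ 2 = vnorm (M *m v) ^+ 2.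
  rewrite vnorm_sqr; apply: eq_bigr => j _; congr (`|_| ^+ 2).
  rewrite !mxE /act_at fupdE eqxx; apply: eq_bigr => k _.
  by rewrite fupd_fupd mxE.
have -> : \sum_j `|g (fupd r i j)| ^+ 2 = vnorm v ^+ 2.
  by rewrite vnorm_sqr; apply: eq_bigr => j _; rewrite mxE.
rewrite -exprMn; apply: lerXn2r => //; rewrite nnegrE ?vnorm_ge0 //.
exact: le_trans (vnorm_ge0 _) (leMc v).
Qed.

End ActAt.

Section ActUpto.

Variables (C : numClosedFieldType) (p n : nat).
Implicit Types (f h : {ffun 'I_p -> 'I_n}) (Ms : 'I_p -> 'M[C]_n).

Definition agree_from (k : nat) h f := [forall i : 'I_p, (k <= i)%N ==> (h i == f i)].

(* The action of Ms 0, ..., Ms (k-1) on the first k tensor factors. *)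
Definition act_upto Ms (k : nat) (g : {ffun 'I_p -> 'I_n} -> C) f :=
  \sum_(h | agree_from k h f) (\prod_(i : 'I_p | (i < k)%N) Ms i (f i) (h i)) * g h.

Lemma act_upto0 Ms g f : act_upto Ms 0 g f = g f.
Proof.
rewrite /act_upto (big_pred1 f) => [|h]; first by rewrite big_pred0 ?mul1r.
apply/forallP/eqP => [agree_hf|->]; last by move=> i; rewrite eqxx implybT.
by apply/ffunP => i; apply/eqP; exact: (agree_hf i).
Qed.

Lemma agree_fromS k (kp : (k < p)%N) h f j :
  agree_from k h (fupd f (Ordinal kp) j) = agree_from k.+1 h f && (h (Ordinal kp) == j).
Proof.
apply/forallP/andP => [agree_k|[/forallP agree_k1 /eqP hj] i].
  split; last by have := agree_k (Ordinal kp); rewrite leqnn fupdE eqxx.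
  apply/forallP => i; apply/implyP => ki; have := agree_k i.
  rewrite fupdE (ltnW ki) /=; case: (i =P Ordinal kp) => [ei|//].
  by rewrite ei /= ltnn in ki.
apply/implyP => ki; rewrite fupdE; case: (i =P Ordinal kp) => [->|ne]; first by rewrite hj.
have := agree_k1 i; rewrite ltn_neqAle ki andbT.
suff -> : k != i by [].
by apply/eqP => ek; apply: ne; apply: val_inj; rewrite /= ek.
Qed.

Lemma act_uptoS Ms k (kp : (k < p)%N) g f :
  act_upto Ms k.+1 g f = act_at (Ms (Ordinal kp)) (Ordinal kp) (act_upto Ms k g) f.
Proof.
set ko := Ordinal kp; rewrite /act_at /act_upto.
rewrite (partition_big (fun h : {ffun 'I_p -> 'I_n} => h ko) xpredT) //=.
apply: eq_bigr => j _; rewrite mulr_sumr.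
apply: eq_big => [h|h /andP[_ /eqP hj]]; first by rewrite agree_fromS.
rewrite (bigD1 ko) //= hj mulrA; congr (_ * _ * _).
apply: eq_big => [i|i /andP[_ ne]]; first by rewrite ltnS ltn_neqAle andbC.
by rewrite fupdE (negbTE ne).
Qed.

Lemma act_upto_all Ms g f :
  act_upto Ms p g f = \sum_(h : {ffun 'I_p -> 'I_n}) (\prod_i Ms i (f i) (h i)) * g h.
Proof.
apply: eq_big => [h|h _]; first by apply/forallP => i; rewrite leqNgt ltn_ord.
by congr (_ * _); apply: eq_bigl => i; rewrite ltn_ord.
Qed.

Lemma sqnorm_act_upto Ms (c : 'I_p -> C) g :
  (forall i, 0 <= c i) -> (forall i v, vnorm (Ms i *m v) <= c i * vnorm v) ->
  forall k, (k <= p)%N ->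
  sqnorm (act_upto Ms k g) <= (\prod_(i : 'I_p | (i < k)%N) c i ^+ 2) * sqnorm g.
Proof.
move=> c_ge0 leMc; elim=> [_|k IH kp]; rewrite /sqnorm.
  under eq_bigr => f _ do rewrite act_upto0.
  by rewrite [\prod_(_ | _) _]big_pred0 ?mul1r.
set ko := Ordinal kp.
under eq_bigr => f _ do rewrite (act_uptoS _ kp).
apply: le_trans (sqnorm_act_at _ _ (leMc ko)) _.
rewrite (bigD1 ko) //= -[X in _ <= X]mulrA; apply: ler_wpM2l; first exact: exprn_ge0.
rewrite (eq_bigl (fun i : 'I_p => (i < k)%N)); first exact: IH (ltnW kp).
by move=> i; rewrite ltnS ltn_neqAle andbC.
Qed.

End ActUpto.

Lemma sqr_sum_le_card_sum_sqr (R : numDomainType) (I : finType) (P : pred I)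
    (x : I -> R) :
  (forall i, x i \is Num.real) ->
  (\sum_(i | P i) x i) ^+ 2 <= #|P|%:R * \sum_(i | P i) x i ^+ 2.
Proof.
move=> x_real; set S := \sum_(i | P i) x i; set Q := \sum_(i | P i) x i ^+ 2.
have sum_sqr_diff : \sum_(i | P i) \sum_(j | P j) (x i - x j) ^+ 2 =
    (#|P|%:R * Q - S ^+ 2) *+ 2.
  have inner i : \sum_(j | P j) (x i - x j) ^+ 2 = x i ^+ 2 *+ #|P| - (x i * S) *+ 2 + Q.
    under eq_bigr => j _ do rewrite sqrrB.
    by rewrite !big_split /= sumrN sumr_const sumrMnl mulr_sumr.
  under eq_bigr => i _ do rewrite inner.
  rewrite !big_split /= sumrN sumr_const sumrMnl -/Q sumrMnl -mulr_suml -/S -expr2.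
  by rewrite mulrnBl mulr2n mulr_natl addrAC.
rewrite -subr_ge0 -(pmulrn_lge0 _ (isT : (0 < 2)%N)) -sum_sqr_diff.
by apply: sumr_ge0 => i _; apply: sumr_ge0 => j _; rewrite -realEsqr realB.
Qed.

Lemma sum_perm (V : nmodType) n (G : {ffun 'I_n -> 'I_n} -> V) :
  \sum_(s : 'S_n) G (pval s) = \sum_(f : {ffun 'I_n -> 'I_n} | injectiveb f) G f.
Proof.
rewrite (reindex_onto (fun s : 'S_n => pval s) (insubd (1%g : 'S_n))) /=.
  by apply: eq_bigl => s; rewrite (valP s) /= valKd eqxx.
by move=> f f_inj; rewrite insubdK.
Qed.

(* n! times the mixed permanent of the Ms i. *)
Definition mixper (R : pzRingType) n (Ms : 'I_n -> 'M[R]_n) : R :=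
  \sum_(s : 'S_n) \sum_(t : 'S_n) \prod_i Ms i (s i) (t i).

Lemma card_injectiveb m n : #|[pred c : {ffun 'I_m -> 'I_n} | injectiveb c]| = n ^_ m.
Proof. by rewrite -cardsE card_inj_ffuns !card_ord. Qed.

Section MixperBound.

Variables (C : numClosedFieldType) (n : nat).

Let injective_indicator (h : {ffun 'I_n -> 'I_n}) : C := (injectiveb h)%:R.

Lemma mixper_act_upto (Ms : 'I_n -> 'M[C]_n) :
  mixper Ms =
  \sum_(f : {ffun 'I_n -> 'I_n} | injectiveb f) act_upto Ms n injective_indicator f.
Proof.
rewrite /mixper -(sum_perm (act_upto Ms n injective_indicator)).
apply: eq_bigr => s _; rewrite act_upto_all.
rewrite [RHS](bigID (fun h : {ffun 'I_n -> 'I_n} => injectiveb h)) /=.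
rewrite [X in _ + X]big1 => [|h /negbTE h_ninj]; last first.
  by rewrite /injective_indicator h_ninj mulr0.
rewrite addr0 -(sum_perm (fun h => \prod_i Ms i (pval s i) (h i) * injective_indicator h)).
apply: eq_bigr => t _; rewrite /injective_indicator (valP t) mulr1.
by apply: eq_bigr => i _; rewrite !pvalE.
Qed.

Lemma sqnorm_injective_indicator : sqnorm injective_indicator = n`!%:R.
Proof.
rewrite /sqnorm (bigID (fun h : {ffun 'I_n -> 'I_n} => injectiveb h)) /=.
rewrite [X in _ + X]big1 => [|h /negbTE h_ninj]; last first.
  by rewrite /injective_indicator h_ninj normr0 expr0n.
rewrite addr0 -ffactnn -card_injectiveb -sumr_const; apply: eq_bigr => h h_inj.
by rewrite /injective_indicator h_inj normr1 expr1n.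
Qed.

Lemma mixper_bound (Ms : 'I_n -> 'M[C]_n) (c : 'I_n -> C) :
  (forall i, 0 <= c i) -> (forall i v, vnorm (Ms i *m v) <= c i * vnorm v) ->
  `|mixper Ms| <= n`!%:R * \prod_i c i.
Proof.
move=> c_ge0 leMc; set w := act_upto Ms n injective_indicator.
set S := \sum_(f : {ffun 'I_n -> 'I_n} | injectiveb f) `|w f|.
have S_ge0 : 0 <= S by apply: sumr_ge0.
have prod_ge0 : 0 <= \prod_i c i by apply: prodr_ge0.
have sqnorm_w : sqnorm w <= (\prod_i c i) ^+ 2 * n`!%:R.
  apply: le_trans (sqnorm_act_upto _ c_ge0 leMc (leqnn n)) _.
  rewrite sqnorm_injective_indicator prodrXl (eq_bigl xpredT) // => i.
  by rewrite ltn_ord.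
have S_sqr : S ^+ 2 <= (n`!%:R * \prod_i c i) ^+ 2.
  apply: le_trans (sqr_sum_le_card_sum_sqr _ (fun f => normr_real (w f))) _.
  have sum_le : \sum_(f : {ffun 'I_n -> 'I_n} | injectiveb f) `|w f| ^+ 2 <= sqnorm w.
    rewrite [X in _ <= X](bigID (fun h : {ffun 'I_n -> 'I_n} => injectiveb h)) /= lerDl.
    by apply: sumr_ge0 => f _; exact: exprn_ge0.
  rewrite card_injectiveb ffactnn.
  apply: le_trans (ler_wpM2l (ler0n _ _) (le_trans sum_le sqnorm_w)) _.
  by rewrite exprMn mulrCA -expr2 mulrC.
rewrite mixper_act_upto; apply: le_trans (ler_norm_sum _ _ _) _.
by rewrite -(ler_pXn2r (n := 2)) // nnegrE ?mulr_ge0.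
Qed.

Lemma norm_sum_mixper (I : finType) (P : pred I) (Ms : I -> 'I_n -> 'M[C]_n)
    (c : I -> 'I_n -> C) :
  (forall j i, P j -> 0 <= c j i) ->
  (forall j i v, P j -> vnorm (Ms j i *m v) <= c j i * vnorm v) ->
  `|\sum_(j | P j) mixper (Ms j)| <= n`!%:R * \sum_(j | P j) \prod_i c j i.
Proof.
move=> c_ge0 leMc; rewrite mulr_sumr; apply: le_trans (ler_norm_sum _ _ _) _.
by apply: ler_sum => j Pj; apply: mixper_bound => [i|i v]; [exact: c_ge0 | exact: leMc].
Qed.

End MixperBound.

Lemma coef1_prod_affine (R : comNzRingType) (I : eqType) (s : seq I) (a b : I -> R) :
  uniq s ->
  (\prod_(i <- s) ((a i)%:P + 'X * (b i)%:P))`_1 =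
    \sum_(j <- s) b j * \prod_(i <- s | i != j) a i.
Proof.
elim: s => [|x s IH /andP[x_notin_s s_uniq]]; first by rewrite !big_nil coefC.
have coef0_affine i : ((a i)%:P + 'X * (b i)%:P)`_0 = a i.
  by rewrite coefD coefC coefXM addr0.
have coef1_affine i : ((a i)%:P + 'X * (b i)%:P)`_1 = b i.
  by rewrite coefD coefC coefXM coefC add0r.
rewrite big_cons coefM big_ord_recl big_ord1 /= IH // coef0_prod.
rewrite coef0_affine coef1_affine (eq_bigr _ (fun i _ => coef0_affine i)).
rewrite big_cons [in X in b x * X]big_cons eqxx /= addrC; congr (_ + _).
  congr (_ * _); rewrite big_seq [RHS]big_seq_cond; apply: eq_bigl => i.
  by case: (boolP (i \in s)) => //= i_in_s; apply/esym; apply: contraNneq x_notin_s => <-.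
rewrite mulr_sumr !big_seq; apply: eq_bigr => j j_in_s; rewrite big_cons.
have -> : x != j by apply: contraNneq x_notin_s => ->.
by rewrite mulrCA.
Qed.

Section PlaceMatrices.

Variables (R : pzRingType) (n m : nat) (A : 'M[R]_n) (Xs : 'I_m -> 'M[R]_n).
Implicit Types (c : {ffun 'I_m -> 'I_n}) (i : 'I_n).

Definition place_mx c i : 'M[R]_n :=
  if [pick k | c k == i] is Some k then Xs k else A.

Lemma place_mx_notin c i : i \notin codom c -> place_mx c i = A.
Proof. by rewrite /place_mx; case: pickP => // k /eqP <-; rewrite codom_f. Qed.

Lemma place_mx_codom c k : injectiveb c -> place_mx c (c k) = Xs k.
Proof.
move/injectiveP => c_inj; rewrite /place_mx; case: pickP => [k' /eqP/c_inj -> //|].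
by move/(_ k); rewrite eqxx.
Qed.

End PlaceMatrices.

Section ExtendInjection.

Variables (n m : nat).
Implicit Types (c : {ffun 'I_m -> 'I_n}) (j : 'I_n).

Definition extend_ffun c j : {ffun 'I_m.+1 -> 'I_n} :=
  [ffun k => if unlift ord_max k is Some k' then c k' else j].

Definition restrict_ffun (c : {ffun 'I_m.+1 -> 'I_n}) : {ffun 'I_m -> 'I_n} :=
  [ffun k => c (widen_ord (leqnSn m) k)].

Lemma widen_ord_lift (k : 'I_m) : widen_ord (leqnSn m) k = lift ord_max k.
Proof. by apply: val_inj; rewrite /= /bump leqNgt ltn_ord. Qed.

Lemma extend_ffun_max c j : extend_ffun c j ord_max = j.
Proof. by rewrite ffunE unlift_none. Qed.

Lemma extend_ffun_widen c j k : extend_ffun c j (widen_ord (leqnSn m) k) = c k.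
Proof. by rewrite ffunE widen_ord_lift liftK. Qed.

Lemma codom_extend_ffun c j : codom (extend_ffun c j) = rcons (codom c) j.
Proof.
rewrite !codomE enum_ordSr map_rcons extend_ffun_max -map_comp; congr rcons.
by apply: eq_map => k /=; rewrite extend_ffun_widen.
Qed.

Lemma injectiveb_extend_ffun c j :
  injectiveb (extend_ffun c j) = (j \notin codom c) && injectiveb c.
Proof. by rewrite /injectiveb /dinjectiveb -!codomE codom_extend_ffun rcons_uniq. Qed.

Lemma extend_restrict_ffun (c : {ffun 'I_m.+1 -> 'I_n}) :
  extend_ffun (restrict_ffun c) (c ord_max) = c.
Proof.
apply/ffunP => k; rewrite ffunE; case: unliftP => [k' ->|->] //.
by rewrite ffunE widen_ord_lift.
Qed.

Lemma restrict_extend_ffun c j : restrict_ffun (extend_ffun c j) = c.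
Proof. by apply/ffunP => k; rewrite ffunE extend_ffun_widen. Qed.

Lemma sum_injectiveb_extend (V : nmodType) (G : {ffun 'I_m.+1 -> 'I_n} -> V) :
  \sum_(c : {ffun 'I_m.+1 -> 'I_n} | injectiveb c) G c =
  \sum_(c : {ffun 'I_m -> 'I_n} | injectiveb c) \sum_(j | j \notin codom c)
    G (extend_ffun c j).
Proof.
rewrite pair_big_dep /=.
rewrite (reindex_onto (fun p => extend_ffun p.1 p.2)
    (fun d : {ffun 'I_m.+1 -> 'I_n} => (restrict_ffun d, d ord_max))) /=.
  apply: eq_bigl => -[c j] /=.
  by rewrite injectiveb_extend_ffun restrict_extend_ffun extend_ffun_max eqxx andbT andbC.
by move=> d _; rewrite extend_restrict_ffun.
Qed.

End ExtendInjection.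

Lemma eq_mixper (R : pzRingType) n (Ms Ms' : 'I_n -> 'M[R]_n) :
  Ms =1 Ms' -> mixper Ms = mixper Ms'.
Proof.
move=> eqM; apply: eq_bigr => s _; apply: eq_bigr => t _.
by apply: eq_bigr => i _; rewrite eqM.
Qed.

Lemma mixper_const (R : comNzRingType) n (A : 'M[R]_n) :
  mixper (fun _ => A) = per A * n`!%:R.
Proof.
have per_shift (s : 'S_n) : \sum_(t : 'S_n) \prod_i A (s i) (t i) = per A.
  rewrite /per [RHS](reindex_inj (mulgI s^-1)%g); apply: eq_bigr => t _.
  rewrite [RHS](reindex_inj (@perm_inj _ s)); apply: eq_bigr => i _.
  by rewrite permM permK.
by rewrite /mixper (eq_bigr _ (fun s _ => per_shift s)) sumr_const card_Sn mulr_natr.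
Qed.

Lemma mixper_expand (R : comNzRingType) n (Ms Ns : 'I_n -> 'M[R]_n) :
  mixper (fun i => Ms i + Ns i) =
  \sum_(b : {ffun 'I_n -> bool}) mixper (fun i => if b i then Ns i else Ms i).
Proof.
rewrite /mixper [RHS]exchange_big /=; apply: eq_bigr => s _.
rewrite [RHS]exchange_big /=; apply: eq_bigr => t _.
rewrite -(bigA_distr_bigA (fun i (b : bool) => (if b then Ns i else Ms i) (s i) (t i))).
by apply: eq_bigr => i _; rewrite big_bool /= mxE addrC.
Qed.

Section DperMixper.

Variables (R : comNzRingType) (n m : nat) (A : 'M[R]_n) (Xs : 'I_m.+1 -> 'M[R]_n).

Let Xw k := Xs (widen_ord (leqnSn m) k).
Let Apoly := map_mx polyC A + 'X *: map_mx polyC (Xs ord_max).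

Lemma coef1_mixper_place (c : {ffun 'I_m -> 'I_n}) :
  (mixper (place_mx Apoly (fun k => map_mx polyC (Xw k)) c))`_1 =
  \sum_(j | j \notin codom c) \sum_(s : 'S_n) \sum_(t : 'S_n)
     Xs ord_max (s j) (t j) * \prod_(i | i != j) place_mx A Xw c i (s i) (t i).
Proof.
have place_poly i r q :
    place_mx Apoly (fun k => map_mx polyC (Xw k)) c i r q
  = (place_mx A Xw c i r q)%:P + 'X * (if i \in codom c then 0 else Xs ord_max r q)%:P.
  rewrite /place_mx; case: pickP => [k /eqP <-|no_k].
    by rewrite codom_f polyC0 mulr0 addr0 mxE.
  have -> : i \in codom c = false.
    by apply/negbTE/codomP => -[k ek]; move: (no_k k); rewrite ek eqxx.
  by rewrite !mxE.
rewrite coef_sum -[RHS]exchange_big /=; apply: eq_bigr => s _.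
rewrite coef_sum -[RHS]exchange_big /=; apply: eq_bigr => t _.
under eq_bigr => i _ do rewrite place_poly.
rewrite coef1_prod_affine ?index_enum_uniq // [RHS]big_mkcond; apply: eq_bigr => j _.
by case: (j \in codom c) => /=; rewrite ?mul0r.
Qed.

Lemma place_mx_extend (c : {ffun 'I_m -> 'I_n}) j i :
  injectiveb c -> j \notin codom c -> i != j ->
  place_mx A Xs (extend_ffun c j) i = place_mx A Xw c i.
Proof.
move=> c_inj j_notin_c ij; case: (boolP (i \in codom c)) => [/codomP [k ->]|i_notin_c].
  rewrite place_mx_codom // -[X in place_mx _ _ _ X](extend_ffun_widen c j k).
  by rewrite place_mx_codom // injectiveb_extend_ffun j_notin_c.
by rewrite !place_mx_notin // codom_extend_ffun mem_rcons in_cons negb_or ij.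
Qed.

End DperMixper.

Lemma Dper_mixper m : forall (R : comNzRingType) n (A : 'M[R]_n) (Xs : 'I_m -> 'M[R]_n),
  Dper A Xs * n`!%:R =
  \sum_(c : {ffun 'I_m -> 'I_n} | injectiveb c) mixper (place_mx A Xs c).
Proof.
elim: m => [|m IH] R n A Xs.
  rewrite /= -mixper_const (eq_bigr (fun _ => mixper (fun _ => A))) => [|c _]; last first.
    by apply: eq_mixper => i; rewrite /place_mx; case: pickP => // -[].
  by rewrite sumr_const card_injectiveb ffactn0.
rewrite /= horner_coef0 coef_deriv mulr1n -coefMC polyC_natr IH coef_sum.
rewrite (eq_bigr _ (fun c _ => coef1_mixper_place A Xs c)) sum_injectiveb_extend.
apply: eq_bigr => c c_inj; apply: eq_bigr => j j_notin_c.
have ext_inj : injectiveb (extend_ffun c j) by rewrite injectiveb_extend_ffun j_notin_c.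
apply: eq_bigr => s _; apply: eq_bigr => t _; rewrite [RHS](bigD1 j) //=.
rewrite -[X in place_mx _ _ _ X](extend_ffun_max c j) place_mx_codom //.
by congr (_ * _); apply: eq_bigr => i ij; rewrite place_mx_extend.
Qed.

Section Bounds.

Variables (C : numClosedFieldType) (n : nat).

Lemma norm_le_of_mul_fact (y b : C) : `|y * n`!%:R| <= n`!%:R * b -> `|y| <= b.
Proof.
have nfact_gt0 : 0 < n`!%:R :> C by rewrite ltr0n fact_gt0.
by rewrite normrM (ger0_norm (ltW nfact_gt0)) mulrC ler_pM2l.
Qed.

Lemma Dper_bound m (A : 'M[C]_n) (a : C) (Xs : 'I_m -> 'M[C]_n) :
  (m <= n)%N -> 0 <= a -> (forall v, vnorm (A *m v) <= a * vnorm v) ->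
  (forall k v, vnorm (Xs k *m v) <= vnorm v) ->
  `|Dper A Xs| <= n`!%:R / (n - m)`!%:R * a ^+ (n - m).
Proof.
move=> le_mn a_ge0 leAa leX1.
pose weight (c : {ffun 'I_m -> 'I_n}) (i : 'I_n) := if i \in codom c then 1 else a.
have prod_weight (c : {ffun 'I_m -> 'I_n}) :
    injectiveb c -> \prod_i weight c i = a ^+ (n - m).
  move/injectiveP=> c_inj; rewrite (bigID (mem (codom c))) /= big1 ?mul1r => [|i]; last first.
    by rewrite /weight => ->.
  rewrite (eq_bigr (fun _ => a)) => [|i /negbTE]; last by rewrite /weight => ->.
  rewrite prodr_const; congr (_ ^+ _); apply/eqP; rewrite -(eqn_add2l m).
  by rewrite -{1}(card_ord m) -(card_codom c_inj) cardC card_ord subnKC.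
have -> : n`!%:R / (n - m)`!%:R = (n ^_ m)%:R :> C.
  by rewrite -(ffact_fact le_mn) natrM mulfK // pnatr_eq0 -lt0n fact_gt0.
apply: norm_le_of_mul_fact; rewrite Dper_mixper.
apply: le_trans (norm_sum_mixper (c := weight) _ _) _ => [c i _|c i v c_inj|].
- by rewrite /weight; case: ifP.
- rewrite /weight; case: (boolP (i \in codom c)) => [/codomP [k ->]|i_notin_c].
    by rewrite place_mx_codom // mul1r.
  by rewrite place_mx_notin.
rewrite (eq_bigr _ (fun c c_inj => prod_weight c c_inj)).
by rewrite sumr_const card_injectiveb [(n ^_ m)%:R * _]mulr_natl.
Qed.

Lemma per_add_bound (A X : 'M[C]_n) (a x : C) :
  0 <= a -> 0 <= x -> (forall v, vnorm (A *m v) <= a * vnorm v) ->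
  (forall v, vnorm (X *m v) <= x * vnorm v) ->
  `|per (A + X) - per A| <= (a + x) ^+ n - a ^+ n.
Proof.
move=> a_ge0 x_ge0 leAa leXx.
pose b0 : {ffun 'I_n -> bool} := [ffun=> false].
pose weight (b : {ffun 'I_n -> bool}) (i : 'I_n) := if b i then x else a.
have sum_weight : \sum_(b | b != b0) \prod_i weight b i = (a + x) ^+ n - a ^+ n.
  have all_weight : \sum_b \prod_i weight b i = (a + x) ^+ n.
    rewrite -(bigA_distr_bigA (fun _ (bi : bool) => if bi then x else a)) /=.
    by under eq_bigr => i _ do rewrite big_bool /= addrC; rewrite prodr_const card_ord.
  have weight_b0 : \prod_i weight b0 i = a ^+ n.
    rewrite (eq_bigr (fun _ => a)) ?prodr_const ?card_ord // => i _.
    by rewrite /weight ffunE.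
  by rewrite -all_weight [in RHS](bigD1 b0) //= weight_b0 addrAC subrr add0r.
have per_diff : (per (A + X) - per A) * n`!%:R =
    \sum_(b | b != b0) mixper (fun i => if b i then X else A).
  rewrite mulrBl -!mixper_const (mixper_expand (fun _ => A) (fun _ => X)).
  rewrite (bigD1 b0) //= (@eq_mixper _ _ _ (fun _ => A)) => [|i]; last by rewrite ffunE.
  by rewrite addrAC subrr add0r.
apply: norm_le_of_mul_fact; rewrite per_diff.
apply: le_trans (norm_sum_mixper (c := weight) _ _) _ => [b i _|b i v _|].
- by rewrite /weight; case: ifP.
- by rewrite /weight; case: (b i).
by rewrite sum_weight.
Qed.

End Bounds.

Unset Implicit Arguments.

Theorem corollary3p6 (C : numClosedFieldType) (n m : nat) (A X : 'M[C]_n)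
    (a x : C) :
  (1 <= m <= n)%N -> is_opnorm A a -> is_opnorm X x ->
  (forall Xs : 'I_m -> 'M[C]_n, (forall i, is_opnorm (Xs i) 1) ->
     `|Dper A Xs| <= (n`!)%:R / ((n - m)`!)%:R * a ^+ (n - m)) /\
  `|per (A + X) - per A| <= (a + x) ^+ n - a ^+ n.
Proof.
case/andP=> m_gt0 le_mn [leAa _] [leXx _].
have n_gt0 : (0 < n)%N := leq_trans m_gt0 le_mn.
have a_ge0 := opnorm_ge0 n_gt0 leAa.
split; last exact: per_add_bound (opnorm_ge0 n_gt0 leXx) leAa leXx.
move=> Xs opnorm_Xs; apply: Dper_bound => // k v.
by rewrite -[vnorm v]mul1r; exact: (opnorm_Xs k).1.
Qed.
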